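(* Let $p_1\equiv p_2\equiv1\pmod4$ be primes, $d=2p_1p_2$, and let $\varepsilon_d=x+y\sqrt d$ be the fundamental unit of $\mathbb{Q}(\sqrt d)$. If $N(\varepsilon_d)=-1$, then there exist $y_1,y_2\in\mathbb{Z}[i]$ such that, for a suitable choice of sign $\pm$ (with $\mp$ the opposite sign) and of the square roots, $\sqrt{\varepsilon_d}$ equals one of (1) $\tfrac12\big[y_1(1+i)\sqrt{(1\pm i)\pi_1\pi_3}+y_2(1-i)\sqrt{(1\mp i)\pi_2\pi_4}\big]$, or (2) $\tfrac12\big[y_1(1+i)\sqrt{(1\pm i)\pi_1\pi_4}+y_2(1-i)\sqrt{(1\mp i)\pi_2\pi_3}\big]$.
   Context: $i=\sqrt{-1}$. Write $p_1=e^2+4f^2$, $p_2=g^2+4h^2$ with integers $e,f,g,h$, and set $\pi_1=e+2if$, $\pi_2=e-2if$, $\pi_3=g+2ih$, $\pi_4=g-2ih$ in $\mathbb{Z}[i]$, so that $p_1=\pi_1\pi_2$ and $p_2=\pi_3\pi_4$. $N$ denotes the norm from $\mathbb{Q}(\sqrt d)$ to $\mathbb{Q}$. *)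

From HB Require Import structures.
From mathcomp Require Import all_boot all_order all_algebra all_field.
Set Implicit Arguments. Unset Strict Implicit. Unset Printing Implicit Defensive.
Import Order.TTheory GRing.Theory Num.Theory.
Local Open Scope ring_scope.

Definition gauss_int (z : algC) : Prop :=
  exists a b : int, z = a%:~R + b%:~R * 'i.

Definition in_Qsqrt (d : int) (u : algC) : Prop :=
  exists a b : rat, u = ratr a + ratr b * sqrtC d%:~R.

Definition Qsqrt_unit (d : int) (u : algC) : Prop :=
  in_Qsqrt d u /\ u \in Aint /\ u != 0 /\ u^-1 \in Aint.

Definition fundamental_unit (d : int) (eps : algC) : Prop :=
  Qsqrt_unit d eps /\ 1 < eps /\
  forall u, Qsqrt_unit d u -> 1 < u -> eps <= u.

Definition Qsqrt_norm_is (d : int) (u : algC) (n : rat) : Prop :=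
  exists a b : rat, u = ratr a + ratr b * sqrtC d%:~R /\
    a ^+ 2 - d%:~R * b ^+ 2 = n.

From HB Require Import structures.
From mathcomp Require Import all_boot all_order all_algebra all_field.
From mathcomp Require Import zify ring.
Import Order.TTheory GRing.Theory Num.Theory.
Set Implicit Arguments. Unset Strict Implicit. Unset Printing Implicit Defensive.

(* Since N(eps) = -1, the coordinates of eps are integers and eps = x + y sqrt d
   with x^2 + 1 = d y^2.  In Z[i], x + i is then divisible by one prime factor of
   p1, one of p2 and by 1 + i; the cofactor has coprime coordinates and norm y^2,
   so it is a unit times a square rho^2 (primitive Pythagorean triples).
   Finally T(+-) = sqrt eps +- i / sqrt eps satisfy T(+-)^2 = 2 (x +- i) and
   T(+) + T(-) = 2 sqrt eps, which yields the representation with y1 = rho and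
   y2 = conj rho, up to the symmetry exchanging the conjugate prime factors. *)

Lemma sqrn_mod4 n : n * n %% 4 = odd n.
Proof.
rewrite -[in LHS](odd_double_half n) -!muln2.
case: (odd n) => /=; set k := n./2.
- have -> : (1 + k * 2) * (1 + k * 2) = (k * k + k) * 4 + 1 by ring.
  by rewrite modnMDl.
- by rewrite add0n (_ : k * 2 * (k * 2) = (k * k) * 4) ?modnMl //; ring.
Qed.

Lemma sum_odd_sqr_neq_sqr U V N : odd U -> odd V -> N * N != U * U + V * V.
Proof.
move=> oU oV; apply/eqP => /(congr1 (modn^~ 4)).
by rewrite sqrn_mod4 -modnDm !sqrn_mod4 oU oV; case: (odd N).
Qed.

Lemma coprime_mul_sqr a b c : coprime a b -> a * b = c * c -> exists m, a = m * m.
Proof.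
move=> cab habc; exists (gcdn a c).
have -> : gcdn a c * gcdn a c = a * gcdn (gcdn a c) (gcdn c b).
  by rewrite muln_gcdl !muln_gcdr -habc (mulnC c a).
suff -> : gcdn (gcdn a c) (gcdn c b) = 1 by rewrite muln1.
apply/eqP; rewrite -dvdn1 -(eqP cab) dvdn_gcd.
by rewrite (dvdn_trans (dvdn_gcdl _ _) (dvdn_gcdl _ _)) (dvdn_trans (dvdn_gcdr _ _) (dvdn_gcdr _ _)).
Qed.

Lemma pythagorean_nat U V N : odd U -> N * N = U * U + V * V -> coprime U V ->
  exists m k, U + k * k = m * m /\ V = 2 * m * k.
Proof.
move=> oU E cUV.
have oV : ~~ odd V by apply/negP => /(sum_odd_sqr_neq_sqr N oU); rewrite E eqxx.
have oN : odd N by rewrite -[odd N]andbb -oddM E oddD !oddM oU (negbTE oV).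
have [w hV] : exists w, V = 2 * w by exists V./2; lia.
(* (N - U)/2 and (N + U)/2 are coprime with product (V/2)^2. *)
have [B hN] : exists B, N = U + 2 * B.
  exists (N - U)./2; have leUN : U <= N by rewrite -leq_sqr -!mulnn E leq_addr.
  have : ~~ odd (N - U) by rewrite oddB // oN oU.
  lia.
have EB : B * (U + B) = w * w.
  apply/eqP; rewrite -(eqn_pmul2l (isT : 0 < 4)) -(eqn_add2l (U * U)); apply/eqP.
  by move: E; rewrite hN hV => E; apply: etrans (etrans _ E) _; ring.
have cB : coprime B (U + B).
  have cUw : coprime U (w * w) by rewrite coprimeMr andbb (coprime_dvdr _ cUV) // hV dvdn_mull.
  rewrite /coprime -dvdn1 -(eqP cUw) dvdn_gcd; apply/andP; split.
    by rewrite -(dvdn_addl U (dvdn_gcdl B (U + B))) dvdn_gcdr.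
  by rewrite -EB dvdn_mulr // dvdn_gcdl.
have [k hk] := coprime_mul_sqr cB EB.
have [m hm] : exists m, U + B = m * m by apply: (@coprime_mul_sqr _ B w); rewrite 1?coprime_sym // mulnC.
exists m, k; split; first by rewrite -hk.
have : w * w = (m * k) * (m * k) by rewrite -EB hm hk; ring.
by move/eqP; rewrite !mulnn eqn_sqr hV => /eqP ->; rewrite mulnA.
Qed.

Local Open Scope ring_scope.

Lemma pythagorean_int u v n : coprimez u v -> u * u + v * v = n * n ->
  exists r t : int, (u = r * r - t * t /\ v = 2 * r * t) \/
                    (u = - (2 * r * t) /\ v = r * r - t * t).
Proof.
wlog oU : u v / odd `|u|.
  move=> wlog cuv E; have [oU|eU] := boolP (odd `|u|); first exact: wlog.
  have oV : odd `|v|.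
    apply/negPn/negP => eV; move: cuv; rewrite coprimezE /coprime => /eqP g1.
    by have := dvdn_gcd 2 `|u| `|v|; rewrite g1 !dvdn2 eU eV.
  rewrite coprimez_sym in cuv; rewrite addrC in E.
  have [r [t [[h1 h2]|[h1 h2]]]] := wlog v u oV cuv E.
  - by exists r, (- t); right; rewrite h1 h2; split; ring.
  - by exists r, (- t); left; rewrite h1 h2; split; ring.
move=> cuv E.
have abs_sqr (x : int) : (`|x| * `|x|)%N%:Z = x * x.
  by rewrite PoszM abszE -normrM ger0_norm // -expr2 sqr_ge0.
have EN : (`|n| * `|n| = `|u| * `|u| + `|v| * `|v|)%N.
  by apply/eqP; rewrite -eqz_nat PoszD !abs_sqr E.
have [m [k [hU hV]]] := pythagorean_nat oU EN cuv.
have {}hU : Posz `|u| = m%:Z * m%:Z - k%:Z * k%:Z by rewrite -!PoszM -hU PoszD addrK.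
have {}hV : Posz `|v| = 2 * m%:Z * k%:Z by rewrite hV !PoszM.
have [hu|hu] : u = Posz `|u| \/ u = - Posz `|u| by lia.
all: have [hv|hv] : v = Posz `|v| \/ v = - Posz `|v| by lia.
- by exists m, k; left; lia.
- by exists m, (- k%:Z); left; lia.
- by exists k, m; left; lia.
- by exists k, (- m%:Z); left; lia.
Qed.

Lemma Euclid_dvdzM (p : nat) (a b : int) : prime p ->
  (p%:Z %| a * b)%Z = (p%:Z %| a)%Z || (p%:Z %| b)%Z.
Proof. by move=> pp; rewrite !dvdzE abszM Euclid_dvdM. Qed.

Lemma prime_dvdz_sqr (p : nat) (m : int) : prime p -> (p%:Z %| m * m)%Z -> (p%:Z %| m)%Z.
Proof. by move=> pp; rewrite Euclid_dvdzM // orbb. Qed.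

Lemma prime_sum_sqr_ndvd (p : nat) (e f : int) : prime p -> odd p ->
  p%:Z = e * e + 4 * (f * f) -> ~~ (p%:Z %| e)%Z.
Proof.
move=> pp op hp; apply/negP => /dvdzP [q hq].
have p_gt1 := prime_gt1 pp.
have /dvdzP [r hr] : (p%:Z %| f)%Z.
  have : (p%:Z %| 2 * 2 * (f * f))%Z.
    have -> : 2 * 2 * (f * f) = p%:Z - q * q * p%:Z * p%:Z by rewrite {1}hp hq; ring.
    by rewrite rpredB ?dvdz_mull.
  have p_ndvd2 : ~~ (p%:Z %| 2)%Z by rewrite dvdzE /=; apply/negP => /dvdn_leq; lia.
  by rewrite !Euclid_dvdzM // (negbTE p_ndvd2) /= orbb.
have : (p%:Z %| 1)%Z.
  apply/dvdzP; exists (q * q + 4 * (r * r)); apply: (@mulfI _ p%:Z); first lia.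
  by rewrite mulr1 [in LHS]hp hq hr; ring.
by rewrite dvdz1; lia.
Qed.

Lemma sum_sqr_prime_dvd_conj_factor (p : nat) (e f x : int) : prime p -> odd p ->
  p%:Z = e * e + 4 * (f * f) -> (p%:Z %| x * x + 1)%Z ->
  exists F, [/\ F = f \/ F = - f, (p%:Z %| x * e + 2 * F)%Z & (p%:Z %| e - 2 * F * x)%Z].
Proof.
move=> pp op hp hx; have p_ndvd_e := prime_sum_sqr_ndvd pp op hp.
wlog dF : f hp / (p%:Z %| 2 * f * x - e)%Z.
  move=> wlog; have : (p%:Z %| (2 * f * x - e) * (2 * f * x + e))%Z.
    have -> : (2 * f * x - e) * (2 * f * x + e) = (x * x + 1) * (4 * (f * f)) - p%:Z.
      by rewrite hp; ring.
    by rewrite rpredB ?dvdz_mulr.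
  rewrite Euclid_dvdzM // => /orP [dF|dF]; first exact: wlog.
  have hpN : p%:Z = e * e + 4 * (- f * - f) by rewrite hp; ring.
  have dFN : (p%:Z %| 2 * - f * x - e)%Z.
    by rewrite (_ : 2 * - f * x - e = - (2 * f * x + e)) ?rpredN //; ring.
  have [F [hF dFe dFx]] := wlog (- f) hpN dFN.
  by exists F; split=> //; rewrite opprK in hF; case: hF; [right|left].
exists f; split; [by left | | by rewrite (_ : e - 2 * f * x = - (2 * f * x - e)) ?rpredN //; ring].
have : (p%:Z %| e * (x * e + 2 * f))%Z.
  have -> : e * (x * e + 2 * f) = x * p%:Z - 2 * f * (2 * f * x - e) by rewrite hp; ring.
  by rewrite rpredB ?dvdz_mull.
by rewrite Euclid_dvdzM // (negbTE p_ndvd_e).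
Qed.

Lemma sum_sqr_even_halve (c1 c2 : int) : (2 %| c1 * c1 + c2 * c2)%Z ->
  exists u v, c1 = u - v /\ c2 = u + v.
Proof.
move=> d2; have : (2%:Z %| (c1 + c2) * (c1 + c2))%Z.
  rewrite (_ : (c1 + c2) * _ = c1 * c1 + c2 * c2 + 2 * (c1 * c2)); last by ring.
  by rewrite rpredD // dvdz_mulr.
by rewrite (@Euclid_dvdzM 2) // orbb => /dvdzP [u hu]; exists u, (u - c1); split; lia.
Qed.

Definition gauss (a b : int) : algC := a%:~R + b%:~R * 'i.

Lemma gauss_int_gauss a b : gauss_int (gauss a b).
Proof. by exists a, b. Qed.

Lemma gaussM a b c d : gauss a b * gauss c d = gauss (a * c - b * d) (a * d + b * c).
Proof.
have sqi : ('i : algC) ^+ 2 = -1 by rewrite sqrCi.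
by rewrite /gauss !(rmorphB, rmorphD, rmorphM) /=; ring: sqi.
Qed.

Lemma conj_gauss a b : (gauss a b)^* = gauss a (- b).
Proof. by rewrite /gauss mulrC conjC_rect ?realz // mulrNz mulNr mulrC. Qed.

Lemma gauss_mul_conj a b : gauss a b * gauss a (- b) = (a * a + b * b)%:~R.
Proof. by rewrite gaussM /gauss (_ : a * - b + b * a = 0) ?(mulrNN, mul0r, addr0) //; ring. Qed.

Lemma Im_gauss a b : 'Im (gauss a b) = b%:~R.
Proof. by rewrite /gauss mulrC Im_rect ?realz. Qed.

Lemma Re_gauss a b : 'Re (gauss a b) = a%:~R.
Proof. by rewrite /gauss mulrC Re_rect ?realz. Qed.

Lemma gauss_inj a b c d : gauss a b = gauss c d -> a = c /\ b = d.
Proof.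
move=> E; split; apply: (@intr_inj algC).
  by rewrite -(Re_gauss a b) E Re_gauss.
by rewrite -(Im_gauss a b) E Im_gauss.
Qed.

Lemma gauss_intM y z : gauss_int y -> gauss_int z -> gauss_int (y * z).
Proof. by move=> [a [b ->]] [c [d ->]]; exists (a * c - b * d), (a * d + b * c); apply: gaussM. Qed.

Lemma gauss_int_conj z : gauss_int z -> gauss_int z^*.
Proof. by move=> [a [b ->]]; exists a, (- b); apply: conj_gauss. Qed.

Lemma gauss_i : gauss 0 1 = 'i.
Proof. by rewrite /gauss mul1r add0r. Qed.

Lemma gauss_neq0 a b : b != 0 -> gauss a b != 0.
Proof.
by move=> b0; apply/eqP => /(congr1 (fun z => 'Im z)) /eqP; rewrite Im_gauss raddf0 intr_eq0 (negbTE b0).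
Qed.

Lemma gauss_intN z : gauss_int z -> gauss_int (- z).
Proof. by move=> [a [b ->]]; exists (- a), (- b); rewrite !mulrNz mulNr opprD. Qed.

Lemma gauss_int_i : gauss_int 'i.
Proof. by rewrite -gauss_i; apply: gauss_int_gauss. Qed.

Lemma gauss_dvd_coprimez (x u v a b : int) :
  gauss x 1 = gauss u v * gauss a b -> coprimez u v.
Proof. by rewrite gaussM => /gauss_inj [_ h1]; apply/coprimezP; exists (b, a); rewrite /= h1; ring. Qed.

Lemma gauss_sqr_of_norm_sqr u v n : coprimez u v -> u * u + v * v = n * n ->
  exists r t, gauss u v = gauss r t ^+ 2 \/ gauss u v = 'i * gauss r t ^+ 2.
Proof.
move=> cuv /(pythagorean_int cuv) [r [t [[-> ->]|[-> ->]]]]; exists r, t.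
  by left; rewrite expr2 gaussM; congr gauss; ring.
by right; rewrite -gauss_i expr2 !gaussM; congr gauss; ring.
Qed.

Lemma gauss_mul_conj_prime (p : nat) (e F : int) : p%:Z = e * e + 4 * (F * F) ->
  gauss e (2 * F) * gauss e (- (2 * F)) = p%:~R.
Proof. by move=> hp; rewrite gauss_mul_conj hp; congr (_%:~R); ring. Qed.

Section TwoPrimes.

Variables (p1 p2 : nat).
Hypotheses (pp1 : prime p1) (pp2 : prime p2) (p12 : p1 != p2) (op1 : odd p1) (op2 : odd p2).

Lemma neg_pell_of_half_integral (A m : int) : m * m = 2 * p1%:Z * p2%:Z * (A * A + 4) ->
  exists x y : int, A = 2 * x /\ x * x + 1 = 2 * p1%:Z * p2%:Z * (y * y).
Proof.
move=> Em.
set d := 2 * p1%:Z * p2%:Z in Em *.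
have p_ndvd2 (p : nat) : odd p -> ~~ (2%:Z %| p%:Z)%Z.
  by move=> op; apply/negP => /dvdzP [k hk]; lia.
have dvd_m (q : nat) : prime q -> (q%:Z %| d)%Z -> (q%:Z %| m)%Z.
  by move=> pq qd; apply: prime_dvdz_sqr => //; rewrite Em dvdz_mulr.
(* [d] is squarefree, so [d] divides [m]; parity then makes [A] and [m / d] even. *)
have [t ht] : exists t, m = t * d.
  apply/dvdzP; rewrite Gauss_dvdz; last first.
    rewrite coprimezE /= coprimeMl; change (1 + 1)%N with 2%N.
    by rewrite !prime_coprime // dvdn2 op2 dvdn_prime2.
  rewrite Gauss_dvdz; last first.
    by rewrite coprimezE /=; change (1 + 1)%N with 2%N; rewrite prime_coprime // dvdn2 op1.
  rewrite !dvd_m //; apply/dvdzP;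
    [exists (p1%:Z * p2%:Z) | exists (2 * p1%:Z) | exists (2 * p2%:Z)]; rewrite /d; ring.
have d0 : d != 0 by rewrite /d !mulf_neq0 // -lt0n prime_gt0.
have Et : t * t * d = A * A + 4.
  by apply: (mulfI d0); rewrite -Em ht; ring.
have [k hk] : exists k, A = 2 * k.
  suff /dvdzP [k ->] : (2%:Z %| A)%Z by exists k; ring.
  apply: prime_dvdz_sqr => //.
  apply/dvdzP; exists (t * t * p1%:Z * p2%:Z - 2).
  by rewrite -[A * A](addrK 4) -Et /d; ring.
have [y hy] : exists y, t = 2 * y.
  suff /dvdzP [y ->] : (2%:Z %| t)%Z by exists y; ring.
  apply: prime_dvdz_sqr => //.
  have : (2%:Z %| t * t * (p1%:Z * p2%:Z))%Z.
    apply/dvdzP; exists (k * k + 1); apply: (@mulfI _ 2) => //.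
    by transitivity (t * t * d); [rewrite /d; ring | rewrite Et hk; ring].
  rewrite (Euclid_dvdzM (t * t)) // (Euclid_dvdzM p1%:Z) //.
  by case/or3P => // h; [case/negP: (p_ndvd2 _ op1) | case/negP: (p_ndvd2 _ op2)].
exists k, y; split=> //.
apply: (@mulfI _ 4) => //.
transitivity (A * A + 4); first by rewrite hk; ring.
by rewrite -Et hy /d; ring.
Qed.

Variables (e f g h : int).
Hypotheses (hp1 : p1%:Z = e * e + 4 * (f * f)) (hp2 : p2%:Z = g * g + 4 * (h * h)).

Lemma factor_x_add_i (x y : int) : x * x + 1 = 2 * p1%:Z * p2%:Z * (y * y) ->
  exists F H c1 c2 : int, [/\ F = f \/ F = - f, H = h \/ H = - h,
    c1 * c1 + c2 * c2 = 2 * (y * y) &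
    gauss x 1 = gauss c1 c2 * gauss e (2 * F) * gauss g (2 * H)].
Proof.
move=> E.
have dvd_p1 : (p1%:Z %| x * x + 1)%Z by apply/dvdzP; exists (2 * p2%:Z * (y * y)); rewrite E; ring.
have dvd_p2 : (p2%:Z %| x * x + 1)%Z by apply/dvdzP; exists (2 * p1%:Z * (y * y)); rewrite E; ring.
have [F [hF dF1 dF2]] := sum_sqr_prime_dvd_conj_factor pp1 op1 hp1 dvd_p1.
have [H [hH dH1 dH2]] := sum_sqr_prime_dvd_conj_factor pp2 op2 hp2 dvd_p2.
have hpF : p1%:Z = e * e + 4 * (F * F) by case: hF => ->; rewrite hp1 //; ring.
have hpH : p2%:Z = g * g + 4 * (H * H) by case: hH => ->; rewrite hp2 //; ring.
(* [gauss C1 C2] is (x + i) times the conjugates of the two prime factors. *)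
set C1 := (x * e + 2 * F) * g + 2 * H * (e - 2 * F * x).
set C2 := (e - 2 * F * x) * g - 2 * H * (x * e + 2 * F).
have eC : gauss C1 C2 = gauss x 1 * gauss e (- (2 * F)) * gauss g (- (2 * H)).
  by rewrite !gaussM; congr gauss; rewrite /C1 /C2; ring.
have cop : coprimez p1%:Z p2%:Z by rewrite coprimezE prime_coprime // dvdn_prime2.
set K := p1%:Z * p2%:Z.
have dC1 : (K %| C1)%Z.
  rewrite Gauss_dvdz //; apply/andP; split; first by apply: rpredD; [apply: dvdz_mulr | apply: dvdz_mull].
  rewrite (_ : C1 = (x * g + 2 * H) * e + 2 * F * (g - 2 * H * x)); last by rewrite /C1; ring.
  by apply: rpredD; [apply: dvdz_mulr | apply: dvdz_mull].
have dC2 : (K %| C2)%Z.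
  rewrite Gauss_dvdz //; apply/andP; split; first by apply: rpredB; [apply: dvdz_mulr | apply: dvdz_mull].
  rewrite (_ : C2 = (g - 2 * H * x) * e - 2 * F * (x * g + 2 * H)); last by rewrite /C2; ring.
  by apply: rpredB; [apply: dvdz_mulr | apply: dvdz_mull].
have [c1 hc1] := dvdzP dC1; have [c2 hc2] := dvdzP dC2.
have K0 : K != 0 by rewrite mulf_eq0 negb_or !eqz_nat -!lt0n !prime_gt0.
exists F, H, c1, c2; split=> //.
  apply: (mulIf (mulf_neq0 K0 K0)).
  transitivity (C1 * C1 + C2 * C2); first by rewrite hc1 hc2; ring.
  transitivity ((x * x + 1) * p1%:Z * p2%:Z); first by rewrite hpF hpH /C1 /C2; ring.
  by rewrite E /K; ring.
have eK : gauss C1 C2 = K%:~R * gauss c1 c2 by rewrite hc1 hc2 /gauss !rmorphM /=; ring.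
apply: (@mulfI _ K%:~R); first by rewrite intr_eq0.
rewrite !mulrA -eK eC /K rmorphM /= -(gauss_mul_conj_prime hpF) -(gauss_mul_conj_prime hpH).
ring.
Qed.

Lemma factor_x_add_i_unit_sqr (x y : int) : x * x + 1 = 2 * p1%:Z * p2%:Z * (y * y) ->
  exists F H (s rho : algC), [/\ F = f \/ F = - f, H = h \/ H = - h,
    s = 1 \/ s = -1, gauss_int rho &
    gauss x 1 = 'i * (1 + s * 'i) * rho ^+ 2 * gauss e (2 * F) * gauss g (2 * H)].
Proof.
move=> E; have [F [H [c1 [c2 [hF hH hc ex]]]]] := factor_x_add_i E.
have [u [v [hu hv]]] : exists u v, c1 = u - v /\ c2 = u + v.
  by apply: sum_sqr_even_halve; rewrite hc dvdz_mulr.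
have {}ex : gauss x 1 = gauss u v * (gauss 1 1 * gauss e (2 * F) * gauss g (2 * H)).
  rewrite ex hu hv (_ : gauss (u - v) (u + v) = gauss 1 1 * gauss u v); first by ring.
  by rewrite gaussM; congr gauss; ring.
have cuv : coprimez u v.
  have [a [b hab]] := gauss_intM (gauss_intM (gauss_int_gauss 1 1) (gauss_int_gauss e (2 * F)))
                                 (gauss_int_gauss g (2 * H)).
  by apply: (@gauss_dvd_coprimez x u v a b); rewrite ex hab.
have huv : u * u + v * v = y * y.
  by apply: (@mulfI _ 2) => //; rewrite -hc hu hv; ring.
have i2 : ('i : algC) ^+ 2 = -1 by rewrite sqrCi.
(* 1 + i = i (1 - i) and (1 + i) i = i (1 + i) *)
have [r [t [hrt|hrt]]] := gauss_sqr_of_norm_sqr cuv huv.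
- exists F, H, (-1), (gauss r t); split=> //; [by right | exact: gauss_int_gauss |].
  by rewrite ex hrt /gauss; ring: i2.
- exists F, H, 1, (gauss r t); split=> //; [by left | exact: gauss_int_gauss |].
  by rewrite ex hrt /gauss; ring: i2.
Qed.

End TwoPrimes.

Lemma Aint_ratr_int (q : rat) : (ratr q : algC) \in Aint -> exists m : int, ratr q = m%:~R :> algC.
Proof. by move=> qA; apply/intrP; rewrite Cint_rat_Aint // Crat_rat. Qed.

Lemma Aint_sqrtC_int (c : int) : sqrtC c%:~R \in Aint.
Proof.
apply: (@root_monic_Aint ('X^2 - (c%:~R)%:P)).
- by rewrite /root !hornerE sqrtCK subrr.
- exact: monicXnsubC.
- by rewrite polyOverXnsubC intr_int.
Qed.

Lemma Qsqrt_norm_neg1_int_coords (D : int) (eps : algC) (a b : rat) :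
  eps \in Aint -> eps^-1 \in Aint ->
  eps = ratr a + ratr b * sqrtC D%:~R -> a ^+ 2 - D%:~R * b ^+ 2 = -1 ->
  exists A m : int, eps - eps^-1 = A%:~R /\ m * m = D * (A * A + 4).
Proof.
move=> epsA epsiA heps hn.
have hs : sqrtC D%:~R ^+ 2 = D%:~R :> algC by rewrite sqrtCK.
move: (sqrtC _) (Aint_sqrtC_int D) hs heps => s sA hs heps.
have hn' : D%:~R * ratr b ^+ 2 = ratr a ^+ 2 + 1 :> algC.
  have := congr1 (ratr : rat -> algC) hn.
  rewrite !(rmorphB, rmorphM, rmorphXn, rmorphN, rmorph1) /= ratr_int => hn1.
  by apply: (@addrI _ (-1)); rewrite -{1}hn1; ring.
have h1 : eps * (ratr b * s - ratr a) = 1.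
  by rewrite heps (_ : 1 = D%:~R * ratr b ^+ 2 - ratr a ^+ 2); [ring: hs | rewrite hn'; ring].
have eps0 : eps != 0 by apply: contra_eq_neq h1 => ->; rewrite mul0r eq_sym oner_neq0.
have hinv : eps^-1 = ratr b * s - ratr a by rewrite -[eps^-1]mulr1 -h1 mulKf.
(* [eps - eps^-1 = 2 a] and [(eps + eps^-1) sqrt D = 2 b D] are rational algebraic integers. *)
have [A hA] : exists A : int, eps - eps^-1 = A%:~R.
  have /Aint_ratr_int [A hA] : (ratr (2 * a) : algC) \in Aint.
    by rewrite rmorphM rmorph_nat /= (_ : _ * _ = eps - eps^-1) ?rpredB // hinv heps; ring.
  by exists A; rewrite -hA rmorphM rmorph_nat /= hinv heps; ring.
have [m hm] : exists m : int, (eps + eps^-1) * s = m%:~R.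
  have /Aint_ratr_int [m hm] : (ratr (2 * b * D%:~R) : algC) \in Aint.
    rewrite !rmorphM rmorph_nat rmorph_int (_ : _ * _ = (eps + eps^-1) * s) ?rpredM ?rpredD //.
    by rewrite hinv heps; ring: hs.
  by exists m; rewrite -hm !rmorphM rmorph_nat rmorph_int hinv heps; ring: hs.
exists A, m; split=> //; apply: (@intr_inj algC).
rewrite !(rmorphM, rmorphD) /= -hm -hA hinv heps.
transitivity (4 * D%:~R * (D%:~R * ratr b ^+ 2) : algC); first by ring: hs.
by rewrite hn'; ring.
Qed.

(* Forms (1) and (2) of the statement are [sqrt_repr (sqrtC eps) pi1 pi2 pi3 pi4]
   and [sqrt_repr (sqrtC eps) pi1 pi2 pi4 pi3]; [s] is the sign +-. *)
Definition sqrt_repr (S q1 q2 q3 q4 : algC) : Prop :=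
  exists y1 y2 : algC, gauss_int y1 /\ gauss_int y2 /\
  exists s : algC, (s = 1 \/ s = -1) /\
  exists w1 w2 : algC,
    w1 ^+ 2 = (1 + s * 'i) * q1 * q3 /\ w2 ^+ 2 = (1 - s * 'i) * q2 * q4 /\
    S = 2^-1 * (y1 * (1 + 'i) * w1 + y2 * (1 - 'i) * w2).

Lemma sqrt_repr_swap S q1 q2 q3 q4 : sqrt_repr S q1 q2 q3 q4 -> sqrt_repr S q2 q1 q4 q3.
Proof.
move=> [y1 [y2 [g1 [g2 [s [hs [w1 [w2 [h1 [h2 hS]]]]]]]]]].
have i2 : ('i : algC) ^+ 2 = -1 by rewrite sqrCi.
(* 1 - i = -i (1 + i) and 1 + i = i (1 - i) *)
exists (- ('i * y2)), ('i * y1); split; first exact/gauss_intN/gauss_intM/g2/gauss_int_i.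
split; first exact/gauss_intM/g1/gauss_int_i.
exists (- s); split; first by case: hs => ->; rewrite ?opprK; [right|left].
exists w2, w1; split; first by rewrite h2; ring.
by split; [rewrite h1; ring | rewrite hS; ring: i2].
Qed.

Lemma half_sum_of_scaled_roots (S T1 T2 c1 c2 q1 q2 : algC) :
  T1 + T2 = 2 * S -> T1 ^+ 2 = c1 ^+ 2 * q1 -> T2 ^+ 2 = c2 ^+ 2 * q2 -> c1 != 0 -> c2 != 0 ->
  exists w1 w2, [/\ w1 ^+ 2 = q1, w2 ^+ 2 = q2 & S = 2^-1 * (c1 * w1 + c2 * w2)].
Proof.
move=> hT h1 h2 c10 c20; exists (T1 / c1), (T2 / c2); split.
- by rewrite expr_div_n h1 mulrC mulKf // expf_neq0.
- by rewrite expr_div_n h2 mulrC mulKf // expf_neq0.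
- by rewrite !(mulrC _ (_ / _)) !divfK // hT mulKf // pnatr_eq0.
Qed.

Lemma sqrt_repr_of_factor (S : algC) (x : int) (s rho q1 q3 : algC) :
  S != 0 -> S ^+ 2 - S ^- 2 = 2 * x%:~R -> s = 1 \/ s = -1 -> gauss_int rho ->
  gauss x 1 = 'i * (1 + s * 'i) * rho ^+ 2 * q1 * q3 ->
  sqrt_repr S q1 q1^* q3 q3^*.
Proof.
move=> S0 hS hs rhoG hx.
have i2 : ('i : algC) ^+ 2 = -1 by rewrite sqrCi.
have rho0 : rho != 0.
  by apply: contraNneq (gauss_neq0 x (oner_neq0 _)) => rho0; rewrite hx rho0 expr0n /= !(mulr0, mul0r).
have hxc : gauss x (-1) = - 'i * (1 - s * 'i) * rho^* ^+ 2 * q1^* * q3^*.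
  have sR : s^* = s by case: hs => ->; rewrite ?rmorphN rmorph1.
  by rewrite -conj_gauss hx !(rmorphM, rmorphD, rmorphXn) /= conjCi conjC1 sR; ring.
have SS : S * S^-1 = 1 by rewrite divff.
(* [T1] and [T2] square to [2 (x + i)] and [2 (x - i)], and they sum to [2 S]. *)
set T1 := S + 'i * S^-1; set T2 := S - 'i * S^-1.
have hT1 : T1 ^+ 2 = (rho * (1 + 'i)) ^+ 2 * ((1 + s * 'i) * q1 * q3).
  transitivity (2 * gauss x 1); last by rewrite hx; ring: i2.
  by rewrite /gauss mulrDr -hS /T1 -exprVn; ring: i2 SS.
have hT2 : T2 ^+ 2 = (rho^* * (1 - 'i)) ^+ 2 * ((1 - s * 'i) * q1^* * q3^*).
  transitivity (2 * gauss x (-1)); last by rewrite hxc; ring: i2.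
  by rewrite /gauss mulrDr -hS /T2 -exprVn; ring: i2 SS.
have hT : T1 + T2 = 2 * S by rewrite /T1 /T2; ring.
have c10 : rho * (1 + 'i) != 0.
  by rewrite mulf_neq0 // (_ : 1 + 'i = gauss 1 1) ?gauss_neq0 // /gauss mul1r.
have c20 : rho^* * (1 - 'i) != 0.
  by rewrite mulf_neq0 ?conjC_eq0 // (_ : 1 - 'i = gauss 1 (-1)) ?gauss_neq0 // /gauss mulN1r.
have [w1 [w2 [h1 h2 ->]]] := half_sum_of_scaled_roots hT hT1 hT2 c10 c20.
exists rho, rho^*; do 2!split=> //; first exact: gauss_int_conj.
by exists s; split=> //; exists w1, w2; do 2!split=> //; rewrite !mulrA.
Qed.

Theorem lemma41 (p1 p2 : nat) (e f g h : int) (eps : algC) :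
  prime p1 -> prime p2 -> p1 != p2 ->
  (p1 %% 4 = 1)%N -> (p2 %% 4 = 1)%N ->
  (p1%:Z = e ^+ 2 + 4 * f ^+ 2) -> (p2%:Z = g ^+ 2 + 4 * h ^+ 2) ->
  let d : int := (2 * p1 * p2)%N%:Z in
  let pi1 : algC := e%:~R + 2 * f%:~R * 'i in
  let pi2 : algC := e%:~R - 2 * f%:~R * 'i in
  let pi3 : algC := g%:~R + 2 * h%:~R * 'i in
  let pi4 : algC := g%:~R - 2 * h%:~R * 'i in
  fundamental_unit d eps ->
  Qsqrt_norm_is d eps (-1) ->
  exists y1 y2 : algC, gauss_int y1 /\ gauss_int y2 /\
  exists s : algC, (s = 1 \/ s = -1) /\
  exists w1 w2 : algC,
    (w1 ^+ 2 = (1 + s * 'i) * pi1 * pi3 /\ w2 ^+ 2 = (1 - s * 'i) * pi2 * pi4 /\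
     sqrtC eps = 2^-1 * (y1 * (1 + 'i) * w1 + y2 * (1 - 'i) * w2))
    \/
    (w1 ^+ 2 = (1 + s * 'i) * pi1 * pi4 /\ w2 ^+ 2 = (1 - s * 'i) * pi2 * pi3 /\
     sqrtC eps = 2^-1 * (y1 * (1 + 'i) * w1 + y2 * (1 - 'i) * w2)).
Proof.
move=> pp1 pp2 p12 p1_4 p2_4 hp1 hp2 d pi1 pi2 pi3 pi4
  [[_ [epsA [eps0 epsiA]]] _] [a [b [heps hn]]].
have op1 : odd p1 by lia.
have op2 : odd p2 by lia.
rewrite !expr2 in hp1 hp2.
have [A [m [hA hm]]] := Qsqrt_norm_neg1_int_coords epsA epsiA heps hn.
have hd : d = 2 * p1%:Z * p2%:Z by rewrite /d !PoszM.
rewrite hd in hm.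
have [x [y [hAx Exy]]] := neg_pell_of_half_integral pp1 pp2 p12 op1 op2 hm.
have [F [H [s [rho [hF hH hs rhoG hx]]]]] := factor_x_add_i_unit_sqr pp1 pp2 p12 op1 op2 hp1 hp2 Exy.
have S0 : sqrtC eps != 0 by rewrite sqrtC_eq0.
have hS : sqrtC eps ^+ 2 - sqrtC eps ^- 2 = 2 * x%:~R by rewrite sqrtCK hA hAx rmorphM.
have hpi1 : gauss e (2 * f) = pi1 by rewrite /gauss rmorphM.
have hpi2 : gauss e (- (2 * f)) = pi2 by rewrite /gauss rmorphN rmorphM mulNr.
have hpi3 : gauss g (2 * h) = pi3 by rewrite /gauss rmorphM.
have hpi4 : gauss g (- (2 * h)) = pi4 by rewrite /gauss rmorphN rmorphM mulNr.
suff [[y1 [y2 [g1 [g2 [s' [hs' [w1 [w2 hw]]]]]]]] | [y1 [y2 [g1 [g2 [s' [hs' [w1 [w2 hw]]]]]]]]] :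
    sqrt_repr (sqrtC eps) pi1 pi2 pi3 pi4 \/ sqrt_repr (sqrtC eps) pi1 pi2 pi4 pi3.
  1,2: exists y1, y2; do 2!split=> //; exists s'; split=> //; exists w1, w2.
  - by left.
  - by right.
have := sqrt_repr_of_factor S0 hS hs rhoG hx.
rewrite !conj_gauss; case: hF => ->; case: hH => ->;
  rewrite ?mulrN ?opprK hpi1 hpi2 hpi3 hpi4 => R.
- by left.
- by right.
- by right; apply: sqrt_repr_swap.
- by left; apply: sqrt_repr_swap.
Qed.
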